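(* Assume the Jacobi parameters of $\rho$ satisfy $0<\inf_n a_n\le\sup_n a_n<\infty$, and let $x_0\in\mathbb{R}$. Then the following three conditions are equivalent: (a) $\rho$ satisfies the Nevai condition at $x_0$; (b) $\int (x-x_0)^2\,d\eta_n^{(x_0)}(x)\to0$ as $n\to\infty$; (c) $\displaystyle \lim_{n\to\infty}\frac{p_n(x_0)^2}{\sum_{j=0}^n p_j(x_0)^2}=0$.
   Context: Let $\rho$ be a probability measure on $\mathbb{R}$ with compact but infinite support, $p_n$ ($n\ge0$) its orthonormal polynomials (real coefficients, positive leading coefficient, $p_0=1$), and $\{a_n,b_n\}_{n\ge1}$ ($a_n>0$, $b_n\in\mathbb{R}$) its Jacobi parameters, defined by $xp_n(x)=a_{n+1}p_{n+1}(x)+b_{n+1}p_n(x)+a_np_{n-1}(x)$ with $p_{-1}=0$. Set $K_n(x,y)=\sum_{j=0}^n p_j(x)p_j(y)$. For $x_0\in\mathbb{R}$ let $\eta_n^{(x_0)}$ be the probability measure $d\eta_n^{(x_0)}(x)=K_n(x,x_0)^2\,d\rho(x)/K_n(x_0,x_0)$. We say $\rho$ satisfies the Nevai condition at $x_0$ if $\eta_n^{(x_0)}\to\delta_{x_0}$ weakly as $n\to\infty$. *)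

From Stdlib Require Import Reals Lra List.
Open Scope R_scope.

(* A compactly supported probability measure rho on R, represented (Riesz)
   by its integration functional I f = \int f d rho on continuous functions. *)
Definition is_prob_functional (I : (R -> R) -> R) : Prop :=
  (forall f g, continuity f -> continuity g ->
     I (fun x => f x + g x) = I f + I g) /\
  (forall (r : R) f, continuity f -> I (fun x => r * f x) = r * I f) /\
  (forall f, continuity f -> (forall x, 0 <= f x) -> 0 <= I f) /\
  I (fun _ => 1) = 1.

(* compact support: supp rho is contained in some [A,B] *)
Definition compact_support (I : (R -> R) -> R) : Prop :=
  exists A B : R, forall f, continuity f ->
    (forall x, A <= x <= B -> f x = 0) -> I f = 0.

(* infinite support: supp rho is not contained in any finite set F *)
Definition infinite_support (I : (R -> R) -> R) : Prop :=
  forall F : list R, exists f, continuity f /\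
    (forall x, In x F -> f x = 0) /\ I f <> 0.

Definition poly_deg_pos_lead (n : nat) (q : R -> R) : Prop :=
  exists c : nat -> R, 0 < c n /\
    forall x, q x = sum_f_R0 (fun k => c k * x ^ k) n.

Definition orthonormal_polys (I : (R -> R) -> R) (p : nat -> R -> R) : Prop :=
  (forall n, poly_deg_pos_lead n (p n)) /\
  (forall m n, I (fun x => p m x * p n x) = if Nat.eqb m n then 1 else 0).

(* {a_n, b_n}_{n>=1} are the Jacobi parameters (a 0, b 0 unused):
   x p_n = a_{n+1} p_{n+1} + b_{n+1} p_n + a_n p_{n-1}, p_{-1} = 0 *)
Definition jacobi_params (p : nat -> R -> R) (a b : nat -> R) : Prop :=
  (forall n, (1 <= n)%nat -> 0 < a n) /\
  (forall n x, x * p n x =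
     a (S n) * p (S n) x + b (S n) * p n x +
     match n with O => 0 | S m => a n * p m x end).

Definition Kn (p : nat -> R -> R) (n : nat) (x y : R) : R :=
  sum_f_R0 (fun j => p j x * p j y) n.

Definition eta_int (I : (R -> R) -> R) (p : nat -> R -> R) (x0 : R)
    (n : nat) (f : R -> R) : R :=
  I (fun x => Kn p n x x0 ^ 2 * f x) / Kn p n x0 x0.

(* Nevai condition: eta_n^{(x0)} -> delta_{x0} weakly *)
Definition nevai (I : (R -> R) -> R) (p : nat -> R -> R) (x0 : R) : Prop :=
  forall f, continuity f -> (exists M, forall x, Rabs (f x) <= M) ->
    Un_cv (fun n => eta_int I p x0 n f) (f x0).

From Stdlib Require Import Reals Lra Psatz FunctionalExtensionality.
Open Scope R_scope.

(* 1. Elementary calculus of probability functionals J (linearity, positivity,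
      |J f| <= J g, locality), culminating in the transfer of a pointwise bound
      |f x - f x0| <= e + C g x to |J f - f x0| <= e + C J g.
   2. For any sequence of probability functionals J_n supported in a fixed
      [A,B], weak convergence to delta_{x0} is equivalent to the vanishing of
      the second moments about x0 (a Chebyshev-type estimate in one direction,
      testing against min((x-x0)^2, M) in the other).
   3. Orthonormality gives the reproducing identity int K_n(x,x0)^2 = K_n(x0,x0),
      so each eta_n is such a functional; the Christoffel-Darboux formula gives
      int (x-x0)^2 d eta_n = a_{n+1}^2 (p_n(x0)^2 + p_{n+1}(x0)^2) / K_n(x0,x0).
   4. An elementary lemma on ratios of partial sums with weights bounded above
      and away from 0 turns this formula into (b) <-> (c). *)

Lemma cont_plus f g : continuity f -> continuity g -> continuity (fun x => f x + g x).
Proof. intros; apply (continuity_plus f g); auto. Qed.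
Lemma cont_minus f g : continuity f -> continuity g -> continuity (fun x => f x - g x).
Proof. intros; apply (continuity_minus f g); auto. Qed.
Lemma cont_mult f g : continuity f -> continuity g -> continuity (fun x => f x * g x).
Proof. intros; apply (continuity_mult f g); auto. Qed.
Lemma cont_const c : continuity (fun _ => c).
Proof. apply continuity_const; intros ? ?; reflexivity. Qed.
Lemma cont_id : continuity (fun x => x).
Proof. apply derivable_continuous, derivable_id. Qed.
Lemma cont_pow f n : continuity f -> continuity (fun x => f x ^ n).
Proof. intros Hf; induction n; simpl; [apply cont_const | apply cont_mult; auto]. Qed.
Lemma cont_abs f : continuity f -> continuity (fun x => Rabs (f x)).
Proof. intros Hf x. apply (continuity_pt_comp f Rabs); auto. apply Rcontinuity_abs. Qed.

Ltac cont := repeat first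
  [ apply cont_minus | apply cont_plus | apply cont_mult | apply cont_pow
  | apply cont_abs | apply cont_id | apply cont_const | assumption ].

Lemma cont_poly (c : nat -> R) n : continuity (fun x => sum_f_R0 (fun k => c k * x ^ k) n).
Proof. induction n; simpl; cont. Qed.

Lemma Rabs_le_inv y e : Rabs y <= e -> - e <= y <= e.
Proof. unfold Rabs; destruct Rcase_abs; lra. Qed.

Lemma Rdiv_nonneg x y : 0 <= x -> 0 < y -> 0 <= x / y.
Proof. intros. apply Rmult_le_pos; [auto | left; apply Rinv_0_lt_compat; auto]. Qed.

Section ProbFunctional.
Variable J : (R -> R) -> R.
Hypothesis HJ : is_prob_functional J.

Lemma J_ext f g : (forall x, f x = g x) -> J f = J g.
Proof. intros H. f_equal. apply functional_extensionality; auto. Qed.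

Lemma J_add f g : continuity f -> continuity g -> J (fun x => f x + g x) = J f + J g.
Proof. destruct HJ as [Ha _]. auto. Qed.

Lemma J_scal f r : continuity f -> J (fun x => r * f x) = r * J f.
Proof. destruct HJ as [_ [Hs _]]. auto. Qed.

Lemma J_sub f g : continuity f -> continuity g -> J (fun x => f x - g x) = J f - J g.
Proof.
  intros Hf Hg.
  rewrite (J_ext _ (fun x => f x + (-1) * g x)) by (intros; ring).
  rewrite J_add, J_scal by cont. ring.
Qed.

Lemma J_const c : J (fun _ => c) = c.
Proof.
  destruct HJ as [_ [_ [_ H1]]].
  rewrite (J_ext _ (fun x => c * 1)) by (intros; ring).
  rewrite J_scal, H1 by cont. ring.
Qed.

Lemma J_nonneg f : continuity f -> (forall x, 0 <= f x) -> 0 <= J f.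
Proof. destruct HJ as [_ [_ [Hp _]]]. auto. Qed.

Lemma J_mono f g : continuity f -> continuity g -> (forall x, f x <= g x) -> J f <= J g.
Proof.
  intros Hf Hg Hfg.
  assert (H : 0 <= J (fun x => g x - f x)) by (apply J_nonneg; [cont | intro x; specialize (Hfg x); lra]).
  rewrite J_sub in H by auto. lra.
Qed.

Lemma J_abs_le f g : continuity f -> continuity g ->
  (forall x, Rabs (f x) <= g x) -> Rabs (J f) <= J g.
Proof.
  intros Hf Hg Hfg. apply Rabs_le. split.
  - assert (H : J (fun x => - g x) <= J f).
    { apply J_mono; [apply (continuity_opp g); auto | auto |].
      intro x; specialize (Hfg x); apply Rabs_le_inv in Hfg; lra. }
    rewrite (J_ext (fun x => - g x) (fun x => (-1) * g x)), J_scal in H by (auto || (intros; ring)).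
    lra.
  - apply J_mono; auto. intro x; specialize (Hfg x); apply Rabs_le_inv in Hfg; lra.
Qed.

Lemma J_deviation_bound f g x0 e C : continuity f -> continuity g ->
  (forall x, Rabs (f x - f x0) <= e + C * g x) -> Rabs (J f - f x0) <= e + C * J g.
Proof.
  intros Hf Hg Hb.
  rewrite <- (J_const (f x0)), <- J_sub by cont.
  rewrite <- (J_const e) at 1. rewrite <- J_scal, <- J_add by cont.
  apply J_abs_le; [cont | cont | exact Hb].
Qed.

Lemma J_local A B f g :
  (forall h, continuity h -> (forall x, A <= x <= B -> h x = 0) -> J h = 0) ->
  continuity f -> continuity g -> (forall x, A <= x <= B -> f x = g x) -> J f = J g.
Proof.
  intros Hloc Hf Hg Hfg.
  assert (H : J (fun x => f x - g x) = 0) by (apply Hloc; [cont | intros x Hx; rewrite Hfg; auto; ring]).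
  rewrite J_sub in H by auto. lra.
Qed.

End ProbFunctional.

Lemma Un_cv_dominated u v K N : 0 <= K ->
  (forall n, (N <= n)%nat -> Rabs (u n) <= K * Rabs (v n)) ->
  Un_cv v 0 -> Un_cv u 0.
Proof.
  intros HK Hb Hv eps He.
  destruct (Hv (eps / (K + 1))) as [N1 HN1]; [apply Rdiv_lt_0_compat; lra |].
  exists (max N N1). intros n Hn. unfold Rdist in *. rewrite Rminus_0_r.
  specialize (HN1 n ltac:(lia)). rewrite Rminus_0_r in HN1. specialize (Hb n ltac:(lia)).
  assert (K * Rabs (v n) <= K * (eps / (K + 1))) by (apply Rmult_le_compat_l; lra).
  assert (K * (eps / (K + 1)) < eps).
  { apply Rmult_lt_reg_r with (K + 1); [lra |]. unfold Rdiv.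
    rewrite Rmult_assoc, Rmult_assoc, Rinv_l by lra. nra. }
  lra.
Qed.

Lemma quadratic_deviation_bound f x0 M eps : continuity f ->
  (forall x, Rabs (f x) <= M) -> 0 < eps ->
  exists C, 0 <= C /\ forall x, Rabs (f x - f x0) <= eps + C * (x - x0) ^ 2.
Proof.
  intros Hf HM He.
  assert (HM0 : 0 <= M) by (pose proof (HM x0); pose proof (Rabs_pos (f x0)); lra).
  destruct (Hf x0 eps He) as [d [Hd Hdf]].
  assert (Hd2 : 0 < d ^ 2) by (apply pow_lt; lra).
  exists (2 * M / d ^ 2). split; [apply Rdiv_nonneg; lra |].
  intro x. destruct (Rlt_le_dec (Rabs (x - x0)) d) as [Hnear | Hfar].
  - assert (Hclose : Rabs (f x - f x0) < eps).
    { destruct (Req_dec x x0) as [-> | Hne].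
      - unfold Rminus; rewrite Rplus_opp_r, Rabs_R0; lra.
      - apply (Hdf x). split; [split; [exact I | auto] | exact Hnear]. }
    assert (0 <= 2 * M / d ^ 2 * (x - x0) ^ 2).
    { apply Rmult_le_pos; [apply Rdiv_nonneg; lra | apply pow2_ge_0]. }
    lra.
  - assert (Hsq : d ^ 2 <= (x - x0) ^ 2) by (rewrite <- (pow2_abs (x - x0)); nra).
    assert (Hfar2 : 2 * M <= 2 * M / d ^ 2 * (x - x0) ^ 2).
    { replace (2 * M) with (2 * M / d ^ 2 * d ^ 2) at 1 by (field; lra).
      apply Rmult_le_compat_l; [apply Rdiv_nonneg; lra | auto]. }
    pose proof (Rabs_le_inv _ _ (HM x)). pose proof (Rabs_le_inv _ _ (HM x0)).
    assert (Rabs (f x - f x0) <= 2 * M) by (apply Rabs_le; lra). lra.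
Qed.

(* [clip M t] = min t M, written so that it is visibly continuous in t. *)
Definition clip (M t : R) : R := (t + M - Rabs (t - M)) / 2.

Lemma clip_bound M t : 0 <= t -> 0 <= M -> Rabs (clip M t) <= M.
Proof. intros. unfold clip, Rabs; repeat destruct Rcase_abs; lra. Qed.

Lemma clip_id M t : t <= M -> clip M t = t.
Proof. intros. unfold clip, Rabs; destruct Rcase_abs; lra. Qed.

Section Concentration.
Variable J : nat -> (R -> R) -> R.
Hypothesis HJ : forall n, is_prob_functional (J n).
Variable x0 : R.

Let moment2 n := J n (fun x => (x - x0) ^ 2).

Lemma moment2_null_weak_delta : Un_cv moment2 0 ->
  forall f, continuity f -> (exists M, forall x, Rabs (f x) <= M) ->
  Un_cv (fun n => J n f) (f x0).
Proof.
  intros H f Hf [M HM] eps He.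
  destruct (quadratic_deviation_bound f x0 M (eps / 2) Hf HM ltac:(lra)) as [C [HC Hdev]].
  destruct (H (eps / (2 * (C + 1)))) as [N HN]; [apply Rdiv_lt_0_compat; lra |].
  exists N. intros n Hn. specialize (HN n Hn). unfold Rdist in *. rewrite Rminus_0_r in HN.
  assert (Hm : 0 <= moment2 n) by (apply (J_nonneg _ (HJ n)); [cont | intro; apply pow2_ge_0]).
  rewrite Rabs_right in HN by lra.
  assert (Hbound := J_deviation_bound (J n) (HJ n) f (fun x => (x - x0) ^ 2) x0 (eps / 2) C
                      Hf ltac:(cont) Hdev).
  assert (C * moment2 n <= C * (eps / (2 * (C + 1)))) by (apply Rmult_le_compat_l; lra).
  assert (C * (eps / (2 * (C + 1))) < eps / 2).
  { apply Rmult_lt_reg_r with (2 * (C + 1)); [lra |].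
    replace (C * (eps / (2 * (C + 1))) * (2 * (C + 1))) with (C * eps) by (field; lra). nra. }
  fold (moment2 n) in Hbound. lra.
Qed.

(* Conversely, if the J n vanish outside a fixed [A,B] and converge weakly to
   delta_{x0}, testing against the bounded function min((x-x0)^2, M), which
   coincides with (x-x0)^2 on [A,B], shows that the second moments vanish. *)
Lemma weak_delta_moment2_null A B :
  (forall n h, continuity h -> (forall x, A <= x <= B -> h x = 0) -> J n h = 0) ->
  (forall f, continuity f -> (exists M, forall x, Rabs (f x) <= M) ->
     Un_cv (fun n => J n f) (f x0)) ->
  Un_cv moment2 0.
Proof.
  intros Hloc Hweak.
  set (M := (Rabs (A - x0) + Rabs (B - x0)) ^ 2).
  assert (HM : 0 <= M) by apply pow2_ge_0.
  set (g := fun x => clip M ((x - x0) ^ 2)).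
  assert (Hg : continuity g) by (unfold g, clip; cont).
  assert (Hgx0 : g x0 = 0) by (unfold g; rewrite clip_id; [ring | replace ((x0 - x0) ^ 2) with 0 by ring; lra]).
  assert (Hcv := Hweak g Hg (ex_intro _ M (fun x => clip_bound M _ (pow2_ge_0 _) HM))).
  rewrite Hgx0 in Hcv.
  apply (Un_cv_ext (fun n => J n g)); [| exact Hcv].
  intro n. apply (J_local (J n) (HJ n) A B); [apply Hloc | exact Hg | cont |].
  intros x Hx. apply clip_id. unfold M. rewrite <- (pow2_abs (x - x0)).
  assert (0 <= Rabs (x - x0) <= Rabs (A - x0) + Rabs (B - x0))
    by (split; [apply Rabs_pos | unfold Rabs; repeat destruct Rcase_abs; lra]).
  nra.
Qed.

End Concentration.

Section OrthonormalPolynomials.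
Variable I : (R -> R) -> R.
Hypothesis HI : is_prob_functional I.
Variable p : nat -> R -> R.
Hypothesis Hp : orthonormal_polys I p.

Lemma p_cont n : continuity (p n).
Proof.
  destruct Hp as [Hdeg _]. destruct (Hdeg n) as [c [_ Hc]].
  replace (p n) with (fun x => sum_f_R0 (fun k => c k * x ^ k) n) by
    (apply functional_extensionality; intro; rewrite Hc; auto).
  apply cont_poly.
Qed.

Lemma p_orth m n : I (fun x => p m x * p n x) = if Nat.eqb m n then 1 else 0.
Proof. destruct Hp as [_ H]; auto. Qed.

(* p_0 is a positive constant, so K_n(y,y) >= p_0(y)^2 > 0. *)
Lemma p0_pos x : 0 < p 0 x.
Proof. destruct Hp as [Hdeg _]. destruct (Hdeg 0%nat) as [c [Hc0 Hc]]. rewrite Hc. simpl. lra. Qed.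

Lemma Kn_S n x y : Kn p (S n) x y = Kn p n x y + p (S n) x * p (S n) y.
Proof. reflexivity. Qed.

Lemma Kn_pos n y : 0 < Kn p n y y.
Proof. induction n; [unfold Kn; simpl; pose proof (p0_pos y); nra | rewrite Kn_S; nra]. Qed.

Lemma Kn_cont n y : continuity (fun x => Kn p n x y).
Proof.
  induction n; [unfold Kn; simpl; pose proof (p_cont 0); cont |].
  pose proof (p_cont (S n)).
  change (continuity (fun x => Kn p n x y + p (S n) x * p (S n) y)). cont.
Qed.

(* K_n(., y) is a polynomial of degree n, hence orthogonal to p_m for m > n. *)
Lemma Kn_orth n m y : (n < m)%nat -> I (fun x => Kn p n x y * p m x) = 0.
Proof.
  pose proof (p_cont m). induction n as [| n IH]; intros Hnm.
  - unfold Kn; simpl. pose proof (p_cont 0).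
    rewrite (J_ext I _ (fun x => p 0 y * (p 0 x * p m x))) by (intros; ring).
    rewrite (J_scal I HI), p_orth by cont.
    destruct m; [lia | simpl; ring].
  - pose proof (Kn_cont n y). pose proof (p_cont (S n)).
    rewrite (J_ext I _ (fun x => Kn p n x y * p m x + p (S n) y * (p (S n) x * p m x)))
      by (intros; rewrite Kn_S; ring).
    rewrite (J_add I HI), (J_scal I HI), IH, p_orth by (cont || lia).
    replace (Nat.eqb (S n) m) with false by (symmetry; apply Nat.eqb_neq; lia). ring.
Qed.

Lemma Kn_sq n y : I (fun x => Kn p n x y ^ 2) = Kn p n y y.
Proof.
  induction n as [| n IH].
  - unfold Kn; simpl. pose proof (p_cont 0).
    rewrite (J_ext I _ (fun x => (p 0 y * p 0 y) * (p 0 x * p 0 x))) by (intros; ring).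
    rewrite (J_scal I HI), p_orth by cont. simpl. ring.
  - pose proof (Kn_cont n y). pose proof (p_cont (S n)).
    rewrite (J_ext I _ (fun x => Kn p n x y ^ 2 + (2 * p (S n) y) * (Kn p n x y * p (S n) x)
       + (p (S n) y * p (S n) y) * (p (S n) x * p (S n) x))) by (intros; rewrite Kn_S; ring).
    rewrite !(J_add I HI), !(J_scal I HI) by cont.
    rewrite IH, Kn_orth, p_orth, Nat.eqb_refl, Kn_S by lia. ring.
Qed.

Lemma eta_prob x0 n : is_prob_functional (eta_int I p x0 n).
Proof.
  pose proof (Kn_cont n x0). pose proof (Kn_pos n x0).
  unfold eta_int. split; [| split; [| split]].
  - intros f g Hf Hg.
    rewrite (J_ext I _ (fun x => Kn p n x x0 ^ 2 * f x + Kn p n x x0 ^ 2 * g x)) by (intros; ring).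
    rewrite (J_add I HI) by cont. field. lra.
  - intros r f Hf.
    rewrite (J_ext I _ (fun x => r * (Kn p n x x0 ^ 2 * f x))) by (intros; ring).
    rewrite (J_scal I HI) by cont. field. lra.
  - intros f Hf Hpos. apply Rmult_le_pos; [| left; apply Rinv_0_lt_compat; lra].
    apply (J_nonneg I HI); [cont | intro x; specialize (Hpos x); pose proof (pow2_ge_0 (Kn p n x x0)); nra].
  - rewrite (J_ext I _ (fun x => Kn p n x x0 ^ 2)) by (intros; ring).
    rewrite Kn_sq. field. lra.
Qed.

Lemma eta_local A B x0 n f :
  (forall h, continuity h -> (forall x, A <= x <= B -> h x = 0) -> I h = 0) ->
  continuity f -> (forall x, A <= x <= B -> f x = 0) -> eta_int I p x0 n f = 0.
Proof.
  intros Hloc Hf Hf0. unfold eta_int.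
  rewrite Hloc; [unfold Rdiv; ring | pose proof (Kn_cont n x0); cont |].
  intros x Hx. rewrite Hf0 by auto. ring.
Qed.

Variables a b : nat -> R.
Hypothesis Hj : jacobi_params p a b.

Lemma christoffel_darboux n x y :
  (x - y) * Kn p n x y = a (S n) * (p (S n) x * p n y - p n x * p (S n) y).
Proof.
  destruct Hj as [_ Hrec]. induction n as [| n IH].
  - unfold Kn; simpl. pose proof (Hrec 0%nat x) as Hx. pose proof (Hrec 0%nat y) as Hy. simpl in *.
    replace ((x - y) * (p 0 x * p 0 y)) with ((x * p 0 x) * p 0 y - (y * p 0 y) * p 0 x) by ring.
    rewrite Hx, Hy. ring.
  - rewrite Kn_S.
    replace ((x - y) * (Kn p n x y + p (S n) x * p (S n) y)) with
      ((x - y) * Kn p n x y + ((x * p (S n) x) * p (S n) y - (y * p (S n) y) * p (S n) x)) by ring.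
    rewrite IH, (Hrec (S n) x), (Hrec (S n) y). ring.
Qed.

Lemma eta_moment2 x0 n : eta_int I p x0 n (fun x => (x - x0) ^ 2) =
  a (S n) ^ 2 * (p n x0 ^ 2 + p (S n) x0 ^ 2) / Kn p n x0 x0.
Proof.
  unfold eta_int. f_equal. pose proof (p_cont n). pose proof (p_cont (S n)).
  rewrite (J_ext I _ (fun x => (a (S n) ^ 2 * p n x0 ^ 2) * (p (S n) x * p (S n) x)
     + (- 2 * a (S n) ^ 2 * p n x0 * p (S n) x0) * (p (S n) x * p n x)
     + (a (S n) ^ 2 * p (S n) x0 ^ 2) * (p n x * p n x))).
  - rewrite !(J_add I HI), !(J_scal I HI), !p_orth, !Nat.eqb_refl by cont.
    replace (Nat.eqb (S n) n) with false by (symmetry; apply Nat.eqb_neq; lia). ring.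
  - intro x. replace (Kn p n x x0 ^ 2 * (x - x0) ^ 2) with (((x - x0) * Kn p n x x0) ^ 2) by ring.
    rewrite christoffel_darboux. ring.
Qed.

End OrthonormalPolynomials.

Section PartialSumRatios.
Variables s q alpha : nat -> R.
Hypothesis Hs : forall n, 0 < s n.
Hypothesis Hq : forall n, 0 <= q n.
Hypothesis Hsum : forall n, s (S n) = s n + q (S n).

(* If q_n / s_n -> 0 then also q_{n+1} / s_n -> 0: once q_{n+1} <= s_{n+1} / 2
   we have q_{n+1} / s_n <= 2 q_{n+1} / s_{n+1}. *)
Lemma next_ratio_null : Un_cv (fun n => q n / s n) 0 -> Un_cv (fun n => q (S n) / s n) 0.
Proof.
  intros H. destruct (H (1 / 2) ltac:(lra)) as [N HN].
  apply (Un_cv_dominated _ (fun n => q (S n) / s (S n)) 2 N); [lra | |].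
  - intros n Hn. specialize (HN (S n) ltac:(lia)). unfold Rdist in HN.
    pose proof (Hs n). pose proof (Hq (S n)). rewrite Hsum in *.
    rewrite Rminus_0_r, Rabs_right in HN by (apply Rle_ge, Rdiv_nonneg; lra).
    assert (Hhalf : q (S n) <= s n).
    { apply Rmult_lt_compat_r with (r := s n + q (S n)) in HN; [| lra].
      unfold Rdiv in HN. rewrite Rmult_assoc, Rinv_l in HN by lra. lra. }
    rewrite !Rabs_right by (apply Rle_ge, Rdiv_nonneg; lra).
    apply Rmult_le_reg_r with (s n * (s n + q (S n))); [nra |].
    replace (q (S n) / s n * (s n * (s n + q (S n)))) with (q (S n) * (s n + q (S n))) by (field; lra).
    replace (2 * (q (S n) / (s n + q (S n))) * (s n * (s n + q (S n)))) with (2 * q (S n) * s n)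
      by (field; lra).
    nra.
  - intros eps He. destruct (H eps He) as [N1 HN1]. exists N1. intros; apply HN1; lia.
Qed.

Variables c C : R.
Hypothesis Hc : 0 < c.
Hypothesis Halpha : forall n, c <= alpha n <= C.

Lemma weighted_ratio_null_iff :
  Un_cv (fun n => alpha n ^ 2 * (q n + q (S n)) / s n) 0 <-> Un_cv (fun n => q n / s n) 0.
Proof.
  split; intro H.
  - eapply (Un_cv_dominated _ _ (/ c ^ 2) 0); [left; apply Rinv_0_lt_compat, pow_lt; lra | | exact H].
    intros n _. pose proof (Hs n). pose proof (Hq n). pose proof (Hq (S n)).
    specialize (Halpha n). assert (Hc2 : 0 < c ^ 2) by (apply pow_lt; lra).
    rewrite !Rabs_right by (apply Rle_ge, Rdiv_nonneg; nra).
    apply Rmult_le_reg_r with (c ^ 2 * s n); [nra |].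
    replace (q n / s n * (c ^ 2 * s n)) with (c ^ 2 * q n) by (field; lra).
    replace (/ c ^ 2 * (alpha n ^ 2 * (q n + q (S n)) / s n) * (c ^ 2 * s n))
      with (alpha n ^ 2 * (q n + q (S n))) by (field; lra).
    assert (c ^ 2 <= alpha n ^ 2) by nra.
    assert (0 <= alpha n ^ 2 * q (S n)) by (apply Rmult_le_pos; [apply pow2_ge_0 | lra]).
    nra.
  - assert (Hsum_null := CV_plus _ _ 0 0 H (next_ratio_null H)). rewrite Rplus_0_r in Hsum_null.
    eapply (Un_cv_dominated _ _ (C ^ 2) 0); [apply pow2_ge_0 | | exact Hsum_null].
    intros n _. pose proof (Hs n). pose proof (Hq n). pose proof (Hq (S n)). specialize (Halpha n).
    assert (0 <= q n / s n) by (apply Rdiv_nonneg; lra).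
    assert (0 <= q (S n) / s n) by (apply Rdiv_nonneg; lra).
    rewrite !Rabs_right by (try apply Rle_ge, Rdiv_nonneg; nra).
    replace (alpha n ^ 2 * (q n + q (S n)) / s n) with (alpha n ^ 2 * (q n / s n + q (S n) / s n))
      by (field; lra).
    apply Rmult_le_compat_r; nra.
Qed.

End PartialSumRatios.

(* Theorem 2.2. *)
Theorem theorem2p2 (I : (R -> R) -> R) (p : nat -> R -> R) (a b : nat -> R)
  (x0 : R) :
  is_prob_functional I -> compact_support I -> infinite_support I ->
  orthonormal_polys I p -> jacobi_params p a b ->
  (exists c C : R, 0 < c /\ forall n, (1 <= n)%nat -> c <= a n <= C) ->
  (nevai I p x0 <->
     Un_cv (fun n => eta_int I p x0 n (fun x => (x - x0) ^ 2)) 0) /\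
  (Un_cv (fun n => eta_int I p x0 n (fun x => (x - x0) ^ 2)) 0 <->
     Un_cv (fun n => p n x0 ^ 2 / sum_f_R0 (fun j => p j x0 ^ 2) n) 0).
Proof.
  intros HI [A [B Hloc]] _ Hp Hj [c [C [Hc Hac]]].
  set (eta := fun n => eta_int I p x0 n).
  assert (Heta : forall n, is_prob_functional (eta n)) by (intro; apply eta_prob; auto).
  split; [split |].
  -
    intro Hnevai. apply (weak_delta_moment2_null eta Heta x0 A B); [| exact Hnevai].
    intros n h Hh Hh0. apply (eta_local I p Hp A B); auto.
  -
    intros Hm f Hf Hbdd. exact (moment2_null_weak_delta eta Heta x0 Hm f Hf Hbdd).
  -
    assert (Hm2 := eta_moment2 I HI p Hp a b Hj x0).
    assert (Hsum : forall n, sum_f_R0 (fun j => p j x0 ^ 2) n = Kn p n x0 x0)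
      by (intro n; apply sum_eq; intros; ring).
    assert (Hstep : forall n, Kn p (S n) x0 x0 = Kn p n x0 x0 + p (S n) x0 ^ 2)
      by (intro n; rewrite Kn_S; ring).
    pose proof (weighted_ratio_null_iff (fun n => Kn p n x0 x0) (fun n => p n x0 ^ 2)
      (fun n => a (S n)) (fun n => Kn_pos I p Hp n x0) (fun n => pow2_ge_0 _) Hstep
      c C Hc (fun n => Hac (S n) ltac:(lia))) as Hiff.
    split; intro H.
    + apply (Un_cv_ext _ _ (fun n => f_equal (Rdiv _) (eq_sym (Hsum n)))), Hiff.
      exact (Un_cv_ext _ _ Hm2 _ H).
    + apply (Un_cv_ext _ _ (fun n => eq_sym (Hm2 n))), Hiff.
      exact (Un_cv_ext _ _ (fun n => f_equal (Rdiv _) (Hsum n)) _ H).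
Qed.
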